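(* There are absolute constants $B_0$ and $M$ such that the following holds. Let $k,k'$ be integers with $1\le k\le k'\le k+10$, and let $u_1=e^{ikx}e^{-k^2t}$, $u_2=e^{ik'y}e^{-(k')^2t}$, both solutions of $\dot u=\Delta u$. There exist a $C^2$ complex function $u$ and a continuous vector field $B$ with values in $\mathbb{C}^2$, $|B|\le B_0$, on $\mathbb{T}^2\times[0,\frac7{2k}]$, such that $\dot u=\Delta u+B\cdot\nabla u$ there, and: for $t\in[0,\frac1{2k}]$, $u=u_1$ and $B=0$; for $t\in[\frac3k,\frac7{2k}]$, $u=u_2$ and $B=0$; and for $t\in[0,\frac7{2k}]$, $u=f(t)e^{ikx}+g(t)e^{ik'y}$ with $f,g\in C^2$ satisfying, for $0\le\alpha\le2$, $|f^{(\alpha)}(t)|\le Mk^{2\alpha}e^{-k^2t}$ and $|g^{(\alpha)}(t)|\le M(k')^{2\alpha}e^{-(k')^2t}$.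
   Context: $\mathbb{T}^2=(\mathbb{R}/2\pi\mathbb{Z})^2$ with coordinates $(x,y)$; $t$ the third coordinate; $\dot u=\partial_tu$; $\Delta$ and $\nabla$ are in the spatial variables $(x,y)$, and $B\cdot\nabla u=B_1\partial_xu+B_2\partial_yu$. *)

From Stdlib Require Import Reals.
From Coquelicot Require Import Coquelicot.
Open Scope R_scope.

Definition cexpi (theta : R) : C := (cos theta, sin theta).

(* derivative (within the set D, i.e. one-sided at endpoints of an interval)
   of a complex-valued function of one real variable *)
Definition has_deriv_within (D : R -> Prop) (f : R -> C) (s : R) (l : C) : Prop :=
  filterlim (fun h : R => Cdiv (Cminus (f (s + h)) (f s)) (RtoC h))
    (within (fun h => h <> 0 /\ D (s + h)) (locally 0)) (locally l).

Definition cont_within1 (D : R -> Prop) (f : R -> C) (s : R) : Prop :=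
  filterlim f (within D (locally s)) (locally (f s)).

Definition C2_on (D : R -> Prop) (f f1 f2 : R -> C) : Prop :=
  forall s, D s ->
    has_deriv_within D f s (f1 s) /\ has_deriv_within D f1 s (f2 s) /\
    cont_within1 D f s /\ cont_within1 D f1 s /\ cont_within1 D f2 s.

(* functions on T^2 x (time set), written u x y t, 2pi-periodic in x and y *)
Definition periodic2 {V : Type} (u : R -> R -> R -> V) : Prop :=
  forall x y t, u (x + 2 * PI) y t = u x y t /\ u x (y + 2 * PI) t = u x y t.

Inductive dir := DX | DY | DT.

(* du is the partial derivative of u in direction d on R^2 x S
   (the time derivative is taken within S, i.e. one-sided at the boundary) *)
Definition is_partial (S : R -> Prop) (d : dir) (u du : R -> R -> R -> C) : Prop :=
  forall x y t, S t ->
    match d with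
    | DX => has_deriv_within (fun _ => True) (fun s => u s y t) x (du x y t)
    | DY => has_deriv_within (fun _ => True) (fun s => u x s t) y (du x y t)
    | DT => has_deriv_within S (fun s => u x y s) t (du x y t)
    end.

Definition cont_on_slab {V : UniformSpace} (S : R -> Prop) (F : R -> R -> R -> V) : Prop :=
  forall x y t, S t ->
    filterlim (fun p : R * R * R => F (fst (fst p)) (snd (fst p)) (snd p))
      (within (fun p : R * R * R => S (snd p)) (locally (x, y, t)))
      (locally (F x y t)).

(* u is C^2 on R^2 x S: D1 d are its first partials, D2 d e = partial_e (partial_d u),
   and u and all these partials are jointly continuous on R^2 x S *)
Definition C2_slab (S : R -> Prop) (u : R -> R -> R -> C)
    (D1 : dir -> R -> R -> R -> C) (D2 : dir -> dir -> R -> R -> R -> C) : Prop :=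
  cont_on_slab S u /\
  (forall d, is_partial S d u (D1 d) /\ cont_on_slab S (D1 d)) /\
  (forall d e, is_partial S e (D1 d) (D2 d e) /\ cont_on_slab S (D2 d e)).

Definition C2norm (b : C * C) : R := sqrt (Cmod (fst b) ^ 2 + Cmod (snd b) ^ 2).

From Stdlib Require Import Reals Lra.
From Coquelicot Require Import Coquelicot.
Open Scope R_scope.

(* The solution is a superposition u = f(t) e^{ikx} + g(t) e^{ik'y} of the two heat modes,
   cut off smoothly in time: f = phi(t) e^{-k^2 t}, where phi drops from 1 to 0 while
   2 <= kt <= 3, and g = psi(t) e^{-k'^2 t}, where psi rises from 0 to 1 while 1/2 <= kt <= 1.
   What the cutoffs leave over, phi' e^{-k^2 t} e^{ikx} + psi' e^{-k'^2 t} e^{ik'y}, is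
   produced by a drift that moves energy between the modes: B_1 = -i beta e^{i(k'y - kx)}
   maps d_x of the first mode to a multiple of e^{ik'y}, and B_2 symmetrically.  Because
   phi = 1 wherever psi' <> 0 and psi = 1 wherever phi' <> 0, the choices
   beta = psi' e^{(k^2 - k'^2) t} / k and delta = phi' e^{(k'^2 - k^2) t} / k' balance the
   equation exactly, and they stay bounded since t <= 7/(2k) and k' - k <= 10. *)

(* Coquelicot states [continuous_plus] etc. with the generic [plus] and [mult], which [apply]
   does not unify with [Rplus] and [Rmult]. *)
Section RealContinuity.
Context {U : UniformSpace}.

Lemma continuous_Rplus (f g : U -> R) x :
  continuous f x -> continuous g x -> continuous (fun z => f z + g z) x.
Proof. apply (continuous_plus f g). Qed.

Lemma continuous_Rminus (f g : U -> R) x :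
  continuous f x -> continuous g x -> continuous (fun z => f z - g z) x.
Proof. apply (continuous_minus f g). Qed.

Lemma continuous_Rmult (f g : U -> R) x :
  continuous f x -> continuous g x -> continuous (fun z => f z * g z) x.
Proof. apply (continuous_mult f g). Qed.

End RealContinuity.

Lemma continuous_pair_components {U V W : UniformSpace} (f : U -> V * W) x :
  continuous (fun z => fst (f z)) x -> continuous (fun z => snd (f z)) x -> continuous f x.
Proof.
  intros H1 H2. apply filterlim_locally. intros eps.
  apply filterlim_locally with (eps := eps) in H1.
  apply filterlim_locally with (eps := eps) in H2.
  generalize (filter_and _ _ H1 H2). apply filter_imp. intros z [A B]. now split.
Qed.

Section ComplexContinuity.
Context {U : UniformSpace}.

Lemma continuous_Re (f : U -> C) x : continuous f x -> continuous (fun z => fst (f z)) x.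
Proof. intros H. apply (continuous_comp f fst); [exact H | apply continuous_fst]. Qed.

Lemma continuous_Im (f : U -> C) x : continuous f x -> continuous (fun z => snd (f z)) x.
Proof. intros H. apply (continuous_comp f snd); [exact H | apply continuous_snd]. Qed.

Lemma continuous_Cplus (f g : U -> C) x :
  continuous f x -> continuous g x -> continuous (fun z => f z + g z)%C x.
Proof.
  intros Hf Hg. apply continuous_pair_components; cbn;
    apply continuous_Rplus; auto using continuous_Re, continuous_Im.
Qed.

Lemma continuous_Cmult (f g : U -> C) x :
  continuous f x -> continuous g x -> continuous (fun z => f z * g z)%C x.
Proof.
  intros Hf Hg. apply continuous_pair_components; cbn;
    [apply continuous_Rminus | apply continuous_Rplus];
    apply continuous_Rmult; auto using continuous_Re, continuous_Im.
Qed.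

Lemma continuous_RtoC (h : U -> R) x : continuous h x -> continuous (fun z => RtoC (h z)) x.
Proof. intros H. apply continuous_pair_components; [exact H | apply continuous_const]. Qed.

Lemma continuous_cexpi (h : U -> R) x : continuous h x -> continuous (fun z => cexpi (h z)) x.
Proof.
  intros H. apply continuous_pair_components; cbn;
    apply (continuous_comp h); auto using continuous_cos, continuous_sin.
Qed.

End ComplexContinuity.

Lemma filterlim_within_continuous {U V : UniformSpace} (f : U -> V) (D : U -> Prop) x :
  continuous f x -> filterlim f (within D (locally x)) (locally (f x)).
Proof.
  intros H P HP. specialize (H P HP). unfold filtermap, within in *.
  revert H. apply filter_imp. auto.
Qed.

Lemma cont_on_slab_continuous {V : UniformSpace} (S : R -> Prop) (F : R -> R -> R -> V) :
  (forall p, continuous (fun p : R * R * R => F (fst (fst p)) (snd (fst p)) (snd p)) p) ->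
  cont_on_slab S F.
Proof.
  intros H x y t _.
  exact (filterlim_within_continuous
           (fun p : R * R * R => F (fst (fst p)) (snd (fst p)) (snd p)) _ (x, y, t) (H _)).
Qed.

Lemma continuous_slab_x (p : R * R * R) : continuous (fun q : R * R * R => fst (fst q)) p.
Proof. apply (continuous_comp fst fst); apply continuous_fst. Qed.

Lemma continuous_slab_y (p : R * R * R) : continuous (fun q : R * R * R => snd (fst q)) p.
Proof. apply (continuous_comp fst snd); [apply continuous_fst | apply continuous_snd]. Qed.

Lemma continuous_slab_t (p : R * R * R) : continuous (fun q : R * R * R => snd q) p.
Proof. apply continuous_snd. Qed.

Lemma has_deriv_within_components (D : R -> Prop) (h : R -> C) s (l : C) :
  is_derive (fun r => fst (h r)) s (fst l) -> is_derive (fun r => snd (h r)) s (snd l) ->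
  has_deriv_within D h s l.
Proof.
  intros H1 H2. apply is_derive_Reals in H1. apply is_derive_Reals in H2.
  apply filterlim_locally. intros eps.
  destruct (H1 eps (cond_pos eps)) as [d1 Hd1].
  destruct (H2 eps (cond_pos eps)) as [d2 Hd2].
  assert (Hd : 0 < Rmin d1 d2) by (apply Rmin_pos; apply cond_pos).
  exists (mkposreal _ Hd). intros r Hr [Hr0 _].
  change (Rabs (r - 0) < Rmin d1 d2) in Hr. rewrite Rminus_0_r in Hr.
  assert (Hquot : Cdiv (Cminus (h (s + r)) (h s)) (RtoC r)
                  = ((fst (h (s + r)) - fst (h s)) / r, (snd (h (s + r)) - snd (h s)) / r)).
  { destruct (h (s + r)), (h s). unfold Cdiv, Cinv, Cminus, Cplus, Copp, Cmult, RtoC; cbn.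
    f_equal; field; auto. }
  rewrite Hquot. split; cbn.
  - apply Hd1; auto. apply Rlt_le_trans with (1 := Hr), Rmin_l.
  - apply Hd2; auto. apply Rlt_le_trans with (1 := Hr), Rmin_r.
Qed.

(** * A C^3 smoothstep *)

Definition glue (a : R) (f1 f2 : R -> R) (x : R) : R :=
  if Rle_dec x a then f1 x else f2 x.

Lemma glue_le a f1 f2 x : x <= a -> glue a f1 f2 x = f1 x.
Proof. unfold glue; destruct (Rle_dec x a); auto; lra. Qed.

Lemma glue_gt a f1 f2 x : a < x -> glue a f1 f2 x = f2 x.
Proof. unfold glue; destruct (Rle_dec x a); auto; lra. Qed.

Lemma is_derive_glue (a : R) (f1 f2 d1 d2 : R -> R) :
  (forall x, is_derive f1 x (d1 x)) -> (forall x, is_derive f2 x (d2 x)) ->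
  f1 a = f2 a -> d1 a = d2 a ->
  forall x, is_derive (glue a f1 f2) x (glue a d1 d2 x).
Proof.
  intros H1 H2 E0 E1 x.
  destruct (Rtotal_order x a) as [Hx | [-> | Hx]].
  - rewrite glue_le by lra. apply (is_derive_ext_loc f1); auto.
    assert (Hd : 0 < a - x) by lra. exists (mkposreal _ Hd). intros y Hy.
    change (Rabs (y - x) < a - x) in Hy. apply Rabs_def2 in Hy.
    rewrite glue_le by lra. reflexivity.
  - rewrite glue_le by lra. apply is_derive_Reals. intros eps Heps.
    specialize (H1 a). specialize (H2 a).
    apply is_derive_Reals in H1. apply is_derive_Reals in H2.
    destruct (H1 eps Heps) as [e1 He1]. destruct (H2 eps Heps) as [e2 He2].
    assert (Hd : 0 < Rmin e1 e2) by (apply Rmin_pos; apply cond_pos).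
    exists (mkposreal _ Hd). intros h Hh Hlt. cbn in Hlt.
    rewrite (glue_le a f1 f2 a) by lra.
    destruct (Rle_dec (a + h) a).
    + rewrite glue_le by lra. apply He1; auto.
      apply Rlt_le_trans with (1 := Hlt), Rmin_l.
    + rewrite glue_gt, E0, E1 by lra. apply He2; auto.
      apply Rlt_le_trans with (1 := Hlt), Rmin_r.
  - rewrite glue_gt by lra. apply (is_derive_ext_loc f2); auto.
    assert (Hd : 0 < x - a) by lra. exists (mkposreal _ Hd). intros y Hy.
    change (Rabs (y - x) < x - a) in Hy. apply Rabs_def2 in Hy.
    rewrite glue_gt by lra. reflexivity.
Qed.

Definition clamp01 (q : R -> R) (top : R) : R -> R :=
  glue 0 (fun _ => 0) (glue 1 q (fun _ => top)).

Lemma clamp01_le0 q top x : x <= 0 -> clamp01 q top x = 0.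
Proof. intros Hx. unfold clamp01. now rewrite glue_le. Qed.

Lemma clamp01_ge1 q top x : q 1 = top -> 1 <= x -> clamp01 q top x = top.
Proof.
  intros Hq Hx. unfold clamp01. rewrite glue_gt by lra.
  destruct (Req_dec x 1) as [-> | Hx1]; [rewrite glue_le | rewrite glue_gt]; auto; lra.
Qed.

Lemma is_derive_clamp01 (q q' : R -> R) (top : R) :
  (forall x, is_derive q x (q' x)) -> q 0 = 0 -> q' 0 = 0 -> q 1 = top -> q' 1 = 0 ->
  forall x, is_derive (clamp01 q top) x (clamp01 q' 0 x).
Proof.
  intros Hq q0 q'0 q1 q'1. unfold clamp01.
  apply is_derive_glue; intros; auto using is_derive_const.
  - apply is_derive_glue; intros; auto using is_derive_const.
  - now rewrite glue_le by lra.
  - now rewrite glue_le by lra.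
Qed.

Lemma Rabs_clamp01_le (q : R -> R) (top c : R) x :
  (forall x, 0 <= x <= 1 -> Rabs (q x) <= c) -> Rabs top <= c ->
  Rabs (clamp01 q top x) <= c.
Proof.
  intros Hq Htop. assert (Hc : 0 <= c) by (eapply Rle_trans; [apply Rabs_pos | exact Htop]).
  unfold clamp01. destruct (Rle_dec x 0).
  - rewrite glue_le, Rabs_R0 by lra. exact Hc.
  - rewrite glue_gt by lra. destruct (Rle_dec x 1).
    + rewrite glue_le by lra. apply Hq; lra.
    + rewrite glue_gt by lra. exact Htop.
Qed.

(* The degree 7 smoothstep: its derivatives of orders 1 to 3 vanish at 0 and 1, so clamping
   it to [0, 1] gives a C^3 function. *)
Definition sstep_poly (x : R) := 35 * x^4 - 84 * x^5 + 70 * x^6 - 20 * x^7.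
Definition sstep_poly1 (x : R) := 140 * x^3 - 420 * x^4 + 420 * x^5 - 140 * x^6.
Definition sstep_poly2 (x : R) := 420 * x^2 - 1680 * x^3 + 2100 * x^4 - 840 * x^5.
Definition sstep_poly3 (x : R) := 840 * x - 5040 * x^2 + 8400 * x^3 - 4200 * x^4.

Definition smoothstep := clamp01 sstep_poly 1.
Definition smoothstep1 := clamp01 sstep_poly1 0.
Definition smoothstep2 := clamp01 sstep_poly2 0.
Definition smoothstep3 := clamp01 sstep_poly3 0.

Lemma is_derive_smoothstep x : is_derive smoothstep x (smoothstep1 x).
Proof.
  apply is_derive_clamp01; unfold sstep_poly, sstep_poly1; try ring.
  intros; auto_derive; [exact I | ring].
Qed.

Lemma is_derive_smoothstep1 x : is_derive smoothstep1 x (smoothstep2 x).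
Proof.
  apply is_derive_clamp01; unfold sstep_poly1, sstep_poly2; try ring.
  intros; auto_derive; [exact I | ring].
Qed.

Lemma is_derive_smoothstep2 x : is_derive smoothstep2 x (smoothstep3 x).
Proof.
  apply is_derive_clamp01; unfold sstep_poly2, sstep_poly3; try ring.
  intros; auto_derive; [exact I | ring].
Qed.

Lemma smoothstep_le0 x : x <= 0 -> smoothstep x = 0 /\ smoothstep1 x = 0.
Proof. intros Hx. split; now apply clamp01_le0. Qed.

Lemma smoothstep_ge1 x : 1 <= x -> smoothstep x = 1 /\ smoothstep1 x = 0.
Proof.
  intros Hx. split; apply clamp01_ge1; auto; unfold sstep_poly, sstep_poly1; ring.
Qed.

(* 5040 bounds the sum of the absolute values of the coefficients of each polynomial. *)
Lemma smoothstep_bounded x :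
  Rabs (smoothstep x) <= 5040 /\ Rabs (smoothstep1 x) <= 5040 /\ Rabs (smoothstep2 x) <= 5040.
Proof.
  assert (Hpow : forall n y, 0 <= y <= 1 -> 0 <= y ^ n <= 1).
  { intros n y Hy. split; [apply pow_le; lra | rewrite <- (pow1 n); apply pow_incr; lra]. }
  repeat split; apply Rabs_clamp01_le; try (rewrite ?Rabs_R0, ?Rabs_R1; lra);
    intros y Hy; apply Rabs_le;
    generalize (Hpow 2%nat y Hy) (Hpow 3%nat y Hy) (Hpow 4%nat y Hy) (Hpow 5%nat y Hy)
      (Hpow 6%nat y Hy) (Hpow 7%nat y Hy);
    unfold sstep_poly, sstep_poly1, sstep_poly2; lra.
Qed.

Definition C2_fun (h h1 h2 : R -> R) : Prop :=
  forall t, is_derive h t (h1 t) /\ is_derive h1 t (h2 t) /\ continuous h2 t.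

Lemma C2_fun_continuous h h1 h2 : C2_fun h h1 h2 -> forall t, continuous h t /\ continuous h1 t.
Proof.
  intros H t. destruct (H t) as [D0 [D1 _]].
  split; apply (ex_derive_continuous (V := R_NormedModule)); eexists; eassumption.
Qed.

Lemma C2_fun_smoothstep : C2_fun smoothstep smoothstep1 smoothstep2.
Proof.
  intros t. split; [|split]; auto using is_derive_smoothstep, is_derive_smoothstep1.
  apply (ex_derive_continuous (V := R_NormedModule)). eexists. apply is_derive_smoothstep2.
Qed.

Lemma C2_fun_affine (h h1 h2 : R -> R) (c d : R) :
  C2_fun h h1 h2 ->
  C2_fun (fun t => h (c * t + d)) (fun t => c * h1 (c * t + d))
    (fun t => c ^ 2 * h2 (c * t + d)).
Proof.
  intros H t.
  assert (Haff : is_derive (fun s => c * s + d) t c) by (auto_derive; [exact I | ring]).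
  destruct (H (c * t + d)) as [D0 [D1 C2]]. split; [|split].
  - apply (is_derive_comp h (fun s => c * s + d)); assumption.
  - apply (is_derive_ext (fun s => c * h1 (c * s + d))); [reflexivity|].
    replace (c ^ 2 * h2 (c * t + d)) with (c * (c * h2 (c * t + d))) by ring.
    apply (is_derive_scal (fun s => h1 (c * s + d))).
    apply (is_derive_comp h1 (fun s => c * s + d)); assumption.
  - apply continuous_Rmult; [apply continuous_const|].
    apply (continuous_comp (fun s => c * s + d) h2); [|exact C2].
    apply (ex_derive_continuous (V := R_NormedModule)). eexists; exact Haff.
Qed.

Definition damped (a : R) (h : R -> R) (t : R) : R := h t * exp (- a * t).

Lemma is_derive_damped (a : R) (h : R -> R) (l t : R) :
  is_derive h t l -> is_derive (damped a h) t ((l - a * h t) * exp (- a * t)).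
Proof.
  intros H. unfold damped. auto_derive.
  - eexists; exact H.
  - replace (Derive (fun x : R => h x) t) with l by (symmetry; now apply is_derive_unique). ring.
Qed.

Lemma Rabs_damped_le (a : R) (h : R -> R) (t c : R) :
  Rabs (h t) <= c -> Rabs (damped a h t) <= c * exp (- a * t).
Proof.
  intros H. unfold damped. rewrite Rabs_mult, (Rabs_pos_eq (exp _)) by (left; apply exp_pos).
  apply Rmult_le_compat_r; [left; apply exp_pos | exact H].
Qed.

Lemma continuous_damped (a : R) (h : R -> R) t : continuous h t -> continuous (damped a h) t.
Proof.
  intros H. apply continuous_Rmult; [exact H|].
  apply (ex_derive_continuous (V := R_NormedModule)). auto_derive. exact I.
Qed.

Lemma C2_fun_damped (a : R) (h h1 h2 : R -> R) :
  C2_fun h h1 h2 ->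
  C2_fun (damped a h) (damped a (fun t => h1 t - a * h t))
    (damped a (fun t => h2 t - 2 * a * h1 t + a ^ 2 * h t)).
Proof.
  intros H t. destruct (H t) as [D0 [D1 C2]].
  destruct (C2_fun_continuous _ _ _ H t) as [C0 C1]. split; [|split].
  - now apply is_derive_damped.
  - replace (damped a (fun t => h2 t - 2 * a * h1 t + a ^ 2 * h t) t)
      with ((h2 t - a * h1 t - a * (h1 t - a * h t)) * exp (- a * t))
      by (unfold damped; ring).
    apply (is_derive_damped a (fun s => h1 s - a * h s)).
    apply (is_derive_minus h1 (fun s => a * h s)); [exact D1|].
    now apply (is_derive_scal h).
  - apply continuous_damped, continuous_Rplus; [apply continuous_Rminus|];
      repeat apply continuous_Rmult; auto using continuous_const.
Qed.

Lemma C2_on_RtoC (D : R -> Prop) (h h1 h2 : R -> R) :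
  C2_fun h h1 h2 ->
  C2_on D (fun t => RtoC (h t)) (fun t => RtoC (h1 t)) (fun t => RtoC (h2 t)).
Proof.
  intros H s _. destruct (H s) as [D0 [D1 C2]].
  destruct (C2_fun_continuous _ _ _ H s) as [C0 C1].
  assert (Hd : forall f l, is_derive f s l ->
            has_deriv_within D (fun t => RtoC (f t)) s (RtoC l)).
  { intros f l Hf. apply has_deriv_within_components; [exact Hf | cbn; auto_derive; auto]. }
  assert (Hc : forall f, continuous f s -> cont_within1 D (fun t => RtoC (f t)) s).
  { intros f Hf. apply filterlim_within_continuous, continuous_RtoC, Hf. }
  repeat split; auto.
Qed.

(** * Two-mode functions on the torus *)

Lemma cexpi_add a b : (cexpi a * cexpi b)%C = cexpi (a + b).
Proof. unfold cexpi, Cmult. rewrite cos_plus, sin_plus. cbn [fst snd]. f_equal; ring. Qed.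

Lemma cexpi_period th (n : nat) : cexpi (th + 2 * INR n * PI) = cexpi th.
Proof. unfold cexpi. now rewrite cos_period, sin_period. Qed.

Lemma cexpi_period_sub th (n : nat) : cexpi (th - 2 * INR n * PI) = cexpi th.
Proof. rewrite <- (cexpi_period _ n). f_equal. ring. Qed.

Lemma Cmod_cexpi th : Cmod (cexpi th) = 1.
Proof.
  unfold Cmod, cexpi; cbn [fst snd]. rewrite <- sqrt_1. f_equal.
  rewrite <- (sin2_cos2 th). unfold Rsqr. ring.
Qed.

Lemma Cmult_shift_mode (c p th ph : R) :
  (RtoC c * ((0, -1) * cexpi (ph - th)) * ((0, p) * cexpi th))%C = (RtoC (p * c) * cexpi ph)%C.
Proof.
  transitivity (((0, -1) * (0, p) * RtoC c) * (cexpi (ph - th) * cexpi th))%C; [ring|].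
  rewrite cexpi_add. replace (ph - th + th) with ph by ring.
  f_equal. apply injective_projections; cbn; ring.
Qed.

Lemma Cmult_i_i (p q : R) : ((0, p) * (0, q))%C = RtoC (- (p * q)).
Proof. apply injective_projections; cbn; ring. Qed.

Lemma exp_le_compat x y : x <= y -> exp x <= exp y.
Proof. intros [H | ->]; [left; now apply exp_increasing | right; reflexivity]. Qed.

Lemma C2norm_le (b : C * C) : C2norm b <= Cmod (fst b) + Cmod (snd b).
Proof.
  unfold C2norm. pose proof (Cmod_ge_0 (fst b)). pose proof (Cmod_ge_0 (snd b)).
  rewrite <- (sqrt_pow2 (Cmod (fst b) + Cmod (snd b))) by lra.
  apply sqrt_le_1_alt. nra.
Qed.

Definition modes (k k' : R) (a : R -> R) (za : C) (b : R -> R) (zb : C) : R -> R -> R -> C :=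
  fun x y t => (RtoC (a t) * (za * cexpi (k * x)) + RtoC (b t) * (zb * cexpi (k' * y)))%C.

Definition modes_partial (k k' : R) (a a' : R -> R) (za : C) (b b' : R -> R) (zb : C)
    (e : dir) : R -> R -> R -> C :=
  match e with
  | DX => modes k k' a (za * (0, k)) b (RtoC 0)
  | DY => modes k k' a (RtoC 0) b (zb * (0, k'))
  | DT => modes k k' a' za b' zb
  end.

Lemma is_partial_modes (S : R -> Prop) (k k' : R) (a a' : R -> R) (za : C)
    (b b' : R -> R) (zb : C) (e : dir) :
  (forall t, is_derive a t (a' t)) -> (forall t, is_derive b t (b' t)) ->
  is_partial S e (modes k k' a za b zb) (modes_partial k k' a a' za b b' zb e).
Proof.
  intros Ha Hb x y t _. destruct za as [za1 za2], zb as [zb1 zb2].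
  destruct e; apply has_deriv_within_components; unfold modes_partial, modes, cexpi; cbn.
  all: auto_derive; try (repeat split; eexists; eauto).
  all: try replace (Derive (fun x : R => a x) t) with (a' t)
         by (symmetry; now apply is_derive_unique).
  all: try replace (Derive (fun x : R => b x) t) with (b' t)
         by (symmetry; now apply is_derive_unique).
  all: ring.
Qed.


Lemma cont_on_slab_modes (S : R -> Prop) (k k' : R) (a : R -> R) (za : C) (b : R -> R) (zb : C) :
  (forall t, continuous a t) -> (forall t, continuous b t) ->
  cont_on_slab S (modes k k' a za b zb).
Proof.
  intros Ha Hb. apply cont_on_slab_continuous. intros p. unfold modes.
  assert (Hcoef : forall h : R -> R, (forall t, continuous h t) ->
            continuous (fun q : R * R * R => RtoC (h (snd q))) p).
  { intros h Hh. apply continuous_RtoC, (continuous_comp snd h), Hh. apply continuous_slab_t. }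
  apply continuous_Cplus; apply continuous_Cmult; auto;
    apply continuous_Cmult; try apply continuous_const;
    apply continuous_cexpi, continuous_Rmult; auto using continuous_const,
    continuous_slab_x, continuous_slab_y.
Qed.

Lemma periodic2_modes (n m : nat) (a : R -> R) (za : C) (b : R -> R) (zb : C) :
  periodic2 (modes (INR n) (INR m) a za b zb).
Proof.
  intros x y t. unfold modes. split.
  - replace (INR n * (x + 2 * PI)) with (INR n * x + 2 * INR n * PI) by ring.
    now rewrite cexpi_period.
  - replace (INR m * (y + 2 * PI)) with (INR m * y + 2 * INR m * PI) by ring.
    now rewrite cexpi_period.
Qed.

Definition modes_D1 (k k' : R) (a a1 b b1 : R -> R) (d : dir) : R -> R -> R -> C :=
  match d with
  | DX => modes k k' a (0, k) b (RtoC 0)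
  | DY => modes k k' a (RtoC 0) b (0, k')
  | DT => modes k k' a1 (RtoC 1) b1 (RtoC 1)
  end.

Definition modes_D2 (k k' : R) (a a1 a2 b b1 b2 : R -> R) (d : dir) : dir -> R -> R -> R -> C :=
  match d with
  | DX => modes_partial k k' a a1 (0, k) b b1 (RtoC 0)
  | DY => modes_partial k k' a a1 (RtoC 0) b b1 (0, k')
  | DT => modes_partial k k' a1 a2 (RtoC 1) b1 b2 (RtoC 1)
  end.

Lemma C2_slab_modes (S : R -> Prop) (k k' : R) (a a1 a2 b b1 b2 : R -> R) :
  C2_fun a a1 a2 -> C2_fun b b1 b2 ->
  C2_slab S (modes k k' a (RtoC 1) b (RtoC 1))
    (modes_D1 k k' a a1 b b1) (modes_D2 k k' a a1 a2 b b1 b2).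
Proof.
  intros Ha Hb.
  assert (Da : forall t, is_derive a t (a1 t)) by apply Ha.
  assert (Da1 : forall t, is_derive a1 t (a2 t)) by apply Ha.
  assert (Db : forall t, is_derive b t (b1 t)) by apply Hb.
  assert (Db1 : forall t, is_derive b1 t (b2 t)) by apply Hb.
  assert (Ca : forall t, continuous a t) by apply (C2_fun_continuous _ _ _ Ha).
  assert (Ca1 : forall t, continuous a1 t) by apply (C2_fun_continuous _ _ _ Ha).
  assert (Ca2 : forall t, continuous a2 t) by apply Ha.
  assert (Cb : forall t, continuous b t) by apply (C2_fun_continuous _ _ _ Hb).
  assert (Cb1 : forall t, continuous b1 t) by apply (C2_fun_continuous _ _ _ Hb).
  assert (Cb2 : forall t, continuous b2 t) by apply Hb.
  split; [|split]; [apply cont_on_slab_modes; auto | intros d | intros d e].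
  - split; [| destruct d; apply cont_on_slab_modes; auto].
    replace (modes_D1 k k' a a1 b b1 d)
      with (modes_partial k k' a a1 (RtoC 1) b b1 (RtoC 1) d)
      by (destruct d; cbn; f_equal; apply injective_projections; cbn; ring).
    now apply is_partial_modes.
  - destruct d; cbn [modes_D1 modes_D2]; split; try (apply is_partial_modes; auto);
      destruct e; apply cont_on_slab_modes; auto.
Qed.

(** * The construction *)

Section Construction.
Variables k k' : R.

Definition cut_off t := smoothstep (- k * t + 3).
Definition cut_off1 t := - k * smoothstep1 (- k * t + 3).
Definition cut_off2 t := (- k) ^ 2 * smoothstep2 (- k * t + 3).
Definition cut_in t := smoothstep (2 * k * t - 1).
Definition cut_in1 t := 2 * k * smoothstep1 (2 * k * t - 1).
Definition cut_in2 t := (2 * k) ^ 2 * smoothstep2 (2 * k * t - 1).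

Lemma C2_fun_cut_off : C2_fun cut_off cut_off1 cut_off2.
Proof. exact (C2_fun_affine _ _ _ (- k) 3 C2_fun_smoothstep). Qed.

Lemma C2_fun_cut_in : C2_fun cut_in cut_in1 cut_in2.
Proof. exact (C2_fun_affine _ _ _ (2 * k) (- 1) C2_fun_smoothstep). Qed.

Definition f := damped (k ^ 2) cut_off.
Definition f1 := damped (k ^ 2) (fun t => cut_off1 t - k ^ 2 * cut_off t).
Definition f2 :=
  damped (k ^ 2) (fun t => cut_off2 t - 2 * k ^ 2 * cut_off1 t + (k ^ 2) ^ 2 * cut_off t).
Definition g := damped (k' ^ 2) cut_in.
Definition g1 := damped (k' ^ 2) (fun t => cut_in1 t - k' ^ 2 * cut_in t).
Definition g2 :=
  damped (k' ^ 2) (fun t => cut_in2 t - 2 * k' ^ 2 * cut_in1 t + (k' ^ 2) ^ 2 * cut_in t).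

Lemma C2_fun_f : C2_fun f f1 f2.
Proof. exact (C2_fun_damped _ _ _ _ C2_fun_cut_off). Qed.

Lemma C2_fun_g : C2_fun g g1 g2.
Proof. exact (C2_fun_damped _ _ _ _ C2_fun_cut_in). Qed.

Definition drift_x t := cut_in1 t * exp ((k ^ 2 - k' ^ 2) * t) / k.
Definition drift_y t := cut_off1 t * exp ((k' ^ 2 - k ^ 2) * t) / k'.

(* [(0, -1)] is [-i], so [B_1 * d_x] turns [e^{ikx}] into [k e^{ik'y}] and [B_2 * d_y] turns
   [e^{ik'y}] into [k' e^{ikx}]. *)
Definition drift (x y t : R) : C * C :=
  ((RtoC (drift_x t) * ((0, -1) * cexpi (k' * y - k * x)))%C,
   (RtoC (drift_y t) * ((0, -1) * cexpi (k * x - k' * y)))%C).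

Lemma cont_on_slab_drift (S : R -> Prop) : cont_on_slab S drift.
Proof.
  assert (Hlin : forall c t, continuous (fun s => c * s) t).
  { intros c t. apply continuous_Rmult; [apply continuous_const | apply continuous_id]. }
  assert (Hexp : forall c t, continuous (fun s => exp (c * s)) t).
  { intros c t. apply (continuous_comp (fun s => c * s)); auto using continuous_exp. }
  assert (Hx : forall t, continuous drift_x t).
  { intros t. unfold drift_x, Rdiv.
    apply continuous_Rmult; [apply continuous_Rmult | apply continuous_const]; auto.
    apply (C2_fun_continuous _ _ _ C2_fun_cut_in). }
  assert (Hy : forall t, continuous drift_y t).
  { intros t. unfold drift_y, Rdiv.
    apply continuous_Rmult; [apply continuous_Rmult | apply continuous_const]; auto.
    apply (C2_fun_continuous _ _ _ C2_fun_cut_off). }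
  apply cont_on_slab_continuous. intros p. unfold drift.
  apply continuous_pair_components; cbn [fst snd];
    apply continuous_Cmult; try (apply continuous_RtoC, (continuous_comp snd); auto;
                                 apply continuous_slab_t);
    apply continuous_Cmult; try apply continuous_const;
    apply continuous_cexpi, continuous_Rminus; apply continuous_Rmult;
    auto using continuous_const, continuous_slab_x, continuous_slab_y.
Qed.

Lemma cutoff_bounds t : 0 <= k ->
  Rabs (cut_off t) <= 5040 /\ Rabs (cut_off1 t) <= 5040 * k /\
  Rabs (cut_off2 t) <= 5040 * k ^ 2 /\ Rabs (cut_in t) <= 5040 /\
  Rabs (cut_in1 t) <= 2 * 5040 * k /\ Rabs (cut_in2 t) <= 4 * 5040 * k ^ 2.
Proof.
  intros Hk.
  destruct (smoothstep_bounded (- k * t + 3)) as [A0 [A1 A2]].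
  destruct (smoothstep_bounded (2 * k * t - 1)) as [B0 [B1 B2]].
  rewrite Rabs_le_between in A0, A1, A2, B0, B1, B2.
  unfold cut_off, cut_off1, cut_off2, cut_in, cut_in1, cut_in2. rewrite !Rabs_le_between.
  repeat split; nra.
Qed.

Lemma f_g_bounds t : 1 <= k -> k <= k' ->
  Rabs (f t) <= 9 * 5040 * exp (- k ^ 2 * t) /\
  Rabs (f1 t) <= 9 * 5040 * k ^ 2 * exp (- k ^ 2 * t) /\
  Rabs (f2 t) <= 9 * 5040 * k ^ 4 * exp (- k ^ 2 * t) /\
  Rabs (g t) <= 9 * 5040 * exp (- k' ^ 2 * t) /\
  Rabs (g1 t) <= 9 * 5040 * k' ^ 2 * exp (- k' ^ 2 * t) /\
  Rabs (g2 t) <= 9 * 5040 * k' ^ 4 * exp (- k' ^ 2 * t).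
Proof.
  intros Hk Hkk'.
  destruct (cutoff_bounds t ltac:(lra)) as [A0 [A1 [A2 [B0 [B1 B2]]]]].
  rewrite Rabs_le_between in A0, A1, A2, B0, B1, B2.
  assert (K2 : k <= k ^ 2) by nra. assert (K3 : k ^ 2 <= k ^ 3) by nra.
  assert (K4 : k ^ 3 <= k ^ 4) by nra. assert (KK : k ^ 2 <= k' ^ 2) by nra.
  assert (KK4 : k * k' ^ 2 <= k' ^ 4) by nra.
  unfold f, f1, f2, g, g1, g2.
  repeat split; apply Rabs_damped_le; rewrite Rabs_le_between; split; nra.
Qed.

Lemma Rabs_drift_x_le t : 1 <= k -> k <= k' -> 0 <= t -> Rabs (drift_x t) <= 2 * 5040.
Proof.
  intros Hk Hkk' T0.
  destruct (cutoff_bounds t ltac:(lra)) as [_ [_ [_ [_ [B1 _]]]]].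
  assert (E : exp ((k ^ 2 - k' ^ 2) * t) <= 1).
  { rewrite <- exp_0. apply exp_le_compat. assert (k ^ 2 <= k' ^ 2) by nra. nra. }
  pose proof (exp_pos ((k ^ 2 - k' ^ 2) * t)). pose proof (Rabs_pos (cut_in1 t)).
  unfold drift_x. rewrite Rabs_div, Rabs_mult, (Rabs_pos_eq k), (Rabs_pos_eq (exp _)) by lra.
  apply Rle_div_l; nra.
Qed.

Lemma Rabs_drift_y_le t : 1 <= k -> k <= k' -> k' <= k + 10 -> 0 <= t <= 7 / (2 * k) ->
  Rabs (drift_y t) <= 5040 * exp 420.
Proof.
  intros Hk Hkk' Hk' [T0 T1]. apply Rle_div_r in T1; [|lra].
  destruct (cutoff_bounds t ltac:(lra)) as [_ [A1 _]].
  (* [(k'^2 - k^2) t = (k' - k) (k' t + k t) <= 10 (2 k t + 10 t) <= 10 (7 + 35) = 420] *)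
  assert (E : exp ((k' ^ 2 - k ^ 2) * t) <= exp 420).
  { apply exp_le_compat.
    replace ((k' ^ 2 - k ^ 2) * t) with ((k' - k) * (k' * t + k * t)) by ring.
    assert (k' * t <= k * t + 10 * t) by nra. nra. }
  pose proof (exp_pos ((k' ^ 2 - k ^ 2) * t)). pose proof (Rabs_pos (cut_off1 t)).
  unfold drift_y. rewrite Rabs_div, Rabs_mult, (Rabs_pos_eq k'), (Rabs_pos_eq (exp _)) by lra.
  apply Rle_div_l; nra.
Qed.

Lemma drift_bounded x y t : 1 <= k -> k <= k' -> k' <= k + 10 -> 0 <= t <= 7 / (2 * k) ->
  C2norm (drift x y t) <= 5040 * (2 + exp 420).
Proof.
  intros Hk Hkk' Hk' Ht.
  pose proof (Rabs_drift_x_le t Hk Hkk' (proj1 Ht)).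
  pose proof (Rabs_drift_y_le t Hk Hkk' Hk' Ht).
  eapply Rle_trans; [apply C2norm_le|]. unfold drift; cbn [fst snd].
  rewrite !Cmod_mult, !Cmod_R, !Cmod_cexpi.
  replace (Cmod (0, -1)) with 1 by (unfold Cmod; cbn [fst snd]; rewrite <- sqrt_1; f_equal; ring).
  lra.
Qed.

Hypothesis k_pos : 0 < k.

Lemma cut_off1_mul_cut_in t : cut_off1 t * cut_in t = cut_off1 t.
Proof.
  unfold cut_off1, cut_in.
  destruct (Rle_dec (- k * t + 3) 0) as [H | H].
  { rewrite (proj2 (smoothstep_le0 _ H)). ring. }
  destruct (Rle_dec 1 (- k * t + 3)) as [H' | H'].
  { rewrite (proj2 (smoothstep_ge1 _ H')). ring. }
  rewrite (proj1 (smoothstep_ge1 (2 * k * t - 1) ltac:(lra))). ring.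
Qed.

Lemma cut_in1_mul_cut_off t : cut_in1 t * cut_off t = cut_in1 t.
Proof.
  unfold cut_in1, cut_off.
  destruct (Rle_dec (2 * k * t - 1) 0) as [H | H].
  { rewrite (proj2 (smoothstep_le0 _ H)). ring. }
  destruct (Rle_dec 1 (2 * k * t - 1)) as [H' | H'].
  { rewrite (proj2 (smoothstep_ge1 _ H')). ring. }
  rewrite (proj1 (smoothstep_ge1 (- k * t + 3) ltac:(lra))). ring.
Qed.

Lemma cutoffs_early t : t <= 1 / (2 * k) ->
  cut_off t = 1 /\ cut_off1 t = 0 /\ cut_in t = 0 /\ cut_in1 t = 0.
Proof.
  intros Ht. apply Rle_div_r in Ht; [|lra].
  destruct (smoothstep_ge1 (- k * t + 3)) as [A B]; [lra|].
  destruct (smoothstep_le0 (2 * k * t - 1)) as [C D]; [lra|].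
  unfold cut_off, cut_off1, cut_in, cut_in1. rewrite A, B, C, D. repeat split; ring.
Qed.

Lemma cutoffs_late t : 3 / k <= t ->
  cut_off t = 0 /\ cut_off1 t = 0 /\ cut_in t = 1 /\ cut_in1 t = 0.
Proof.
  intros Ht. apply Rle_div_l in Ht; [|lra].
  destruct (smoothstep_le0 (- k * t + 3)) as [A B]; [lra|].
  destruct (smoothstep_ge1 (2 * k * t - 1)) as [C D]; [lra|].
  unfold cut_off, cut_off1, cut_in, cut_in1. rewrite A, B, C, D. repeat split; ring.
Qed.

Hypothesis k'_pos : 0 < k'.

Lemma f1_transfer t : f1 t = - k ^ 2 * f t + k' * drift_y t * g t.
Proof.
  assert (Hexp : exp ((k' ^ 2 - k ^ 2) * t) * exp (- k' ^ 2 * t) = exp (- k ^ 2 * t)).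
  { rewrite <- exp_plus. f_equal. ring. }
  unfold f1, f, g, drift_y, damped.
  rewrite <- (cut_off1_mul_cut_in t) at 1. rewrite <- Hexp. field. lra.
Qed.

Lemma g1_transfer t : g1 t = - k' ^ 2 * g t + k * drift_x t * f t.
Proof.
  assert (Hexp : exp ((k ^ 2 - k' ^ 2) * t) * exp (- k ^ 2 * t) = exp (- k' ^ 2 * t)).
  { rewrite <- exp_plus. f_equal. ring. }
  unfold g1, g, f, drift_x, damped.
  rewrite <- (cut_in1_mul_cut_off t) at 1. rewrite <- Hexp. field. lra.
Qed.

Lemma heat_drift_equation x y t :
  modes_D1 k k' f f1 g g1 DT x y t =
  (modes_D2 k k' f f1 f2 g g1 g2 DX DX x y t + modes_D2 k k' f f1 f2 g g1 g2 DY DY x y t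
   + fst (drift x y t) * modes_D1 k k' f f1 g g1 DX x y t
   + snd (drift x y t) * modes_D1 k k' f f1 g g1 DY x y t)%C.
Proof.
  cbn [modes_D1 modes_D2 modes_partial drift fst snd]. unfold modes.
  (* After the drift terms are moved onto the other mode, both sides are combinations of
     [e^{ikx}] and [e^{ik'y}] whose coefficients agree by [f1_transfer] and [g1_transfer]. *)
  transitivity (RtoC (f t) * (((0, k) * (0, k)) * cexpi (k * x))
     + RtoC (g t) * (((0, k') * (0, k')) * cexpi (k' * y))
     + RtoC (f t) * (RtoC (drift_x t) * ((0, -1) * cexpi (k' * y - k * x))
                     * ((0, k) * cexpi (k * x)))
     + RtoC (g t) * (RtoC (drift_y t) * ((0, -1) * cexpi (k * x - k' * y))
                     * ((0, k') * cexpi (k' * y))))%C; [|ring].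
  rewrite !Cmult_shift_mode, !Cmult_i_i, f1_transfer, g1_transfer.
  unfold cexpi. apply injective_projections; cbn; ring.
Qed.

Lemma solution_early x y t : t <= 1 / (2 * k) ->
  modes k k' f (RtoC 1) g (RtoC 1) x y t = (cexpi (k * x) * RtoC (exp (- k ^ 2 * t)))%C /\
  drift x y t = (RtoC 0, RtoC 0).
Proof.
  intros Ht. destruct (cutoffs_early t Ht) as [A [B [C D]]].
  unfold modes, drift, f, g, damped, drift_x, drift_y. rewrite A, B, C, D.
  split; [| f_equal]; apply injective_projections; cbn; field; lra.
Qed.

Lemma solution_late x y t : 3 / k <= t ->
  modes k k' f (RtoC 1) g (RtoC 1) x y t = (cexpi (k' * y) * RtoC (exp (- k' ^ 2 * t)))%C /\
  drift x y t = (RtoC 0, RtoC 0).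
Proof.
  intros Ht. destruct (cutoffs_late t Ht) as [A [B [C D]]].
  unfold modes, drift, f, g, damped, drift_x, drift_y. rewrite A, B, C, D.
  split; [| f_equal]; apply injective_projections; cbn; field; lra.
Qed.

End Construction.

Lemma periodic2_drift (n m : nat) : periodic2 (drift (INR n) (INR m)).
Proof.
  intros x y t. unfold drift. split.
  - replace (INR m * y - INR n * (x + 2 * PI)) with (INR m * y - INR n * x - 2 * INR n * PI)
      by ring.
    replace (INR n * (x + 2 * PI) - INR m * y) with (INR n * x - INR m * y + 2 * INR n * PI)
      by ring.
    now rewrite cexpi_period, cexpi_period_sub.
  - replace (INR m * (y + 2 * PI) - INR n * x) with (INR m * y - INR n * x + 2 * INR m * PI)
      by ring.
    replace (INR n * x - INR m * (y + 2 * PI)) with (INR n * x - INR m * y - 2 * INR m * PI)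
      by ring.
    now rewrite cexpi_period, cexpi_period_sub.
Qed.

Theorem mainTheorem16 :
  exists B0 M : R,
  forall k k' : nat, (1 <= k)%nat -> (k <= k')%nat -> (k' <= k + 10)%nat ->
  let kr := INR k in
  let kr' := INR k' in
  let T := 7 / (2 * kr) in
  let S := fun t => 0 <= t <= T in
  exists (u : R -> R -> R -> C) (B : R -> R -> R -> C * C)
         (D1 : dir -> R -> R -> R -> C) (D2 : dir -> dir -> R -> R -> R -> C)
         (f f1 f2 g g1 g2 : R -> C),
    periodic2 u /\ periodic2 B /\
    C2_slab S u D1 D2 /\
    cont_on_slab S B /\
    (forall x y t, S t -> C2norm (B x y t) <= B0) /\
    (forall x y t, S t ->
       D1 DT x y t =
       (D2 DX DX x y t + D2 DY DY x y t
        + fst (B x y t) * D1 DX x y t + snd (B x y t) * D1 DY x y t)%C) /\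
    (forall x y t, 0 <= t <= 1 / (2 * kr) ->
       u x y t = (cexpi (kr * x) * RtoC (exp (- kr ^ 2 * t)))%C /\ B x y t = (RtoC 0, RtoC 0)) /\
    (forall x y t, 3 / kr <= t <= T ->
       u x y t = (cexpi (kr' * y) * RtoC (exp (- kr' ^ 2 * t)))%C /\ B x y t = (RtoC 0, RtoC 0)) /\
    (forall x y t, S t ->
       u x y t = (f t * cexpi (kr * x) + g t * cexpi (kr' * y))%C) /\
    C2_on S f f1 f2 /\ C2_on S g g1 g2 /\
    (forall t, S t ->
       Cmod (f t) <= M * exp (- kr ^ 2 * t) /\
       Cmod (f1 t) <= M * kr ^ 2 * exp (- kr ^ 2 * t) /\
       Cmod (f2 t) <= M * kr ^ 4 * exp (- kr ^ 2 * t) /\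
       Cmod (g t) <= M * exp (- kr' ^ 2 * t) /\
       Cmod (g1 t) <= M * kr' ^ 2 * exp (- kr' ^ 2 * t) /\
       Cmod (g2 t) <= M * kr' ^ 4 * exp (- kr' ^ 2 * t)).
Proof.
  exists (5040 * (2 + exp 420)), (9 * 5040).
  intros n n' Hn Hnn' Hn'. cbv zeta.
  assert (K1 : 1 <= INR n) by (apply (le_INR 1); exact Hn).
  assert (K2 : INR n <= INR n') by (apply le_INR; exact Hnn').
  assert (K3 : INR n' <= INR n + 10).
  { replace 10 with (INR 10) by (simpl; ring). rewrite <- plus_INR. apply le_INR, Hn'. }
  set (k := INR n) in *. set (k' := INR n') in *.
  exists (modes k k' (f k) (RtoC 1) (g k k') (RtoC 1)), (drift k k'),
    (modes_D1 k k' (f k) (f1 k) (g k k') (g1 k k')),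
    (modes_D2 k k' (f k) (f1 k) (f2 k) (g k k') (g1 k k') (g2 k k')),
    (fun t => RtoC (f k t)), (fun t => RtoC (f1 k t)), (fun t => RtoC (f2 k t)),
    (fun t => RtoC (g k k' t)), (fun t => RtoC (g1 k k' t)), (fun t => RtoC (g2 k k' t)).
  assert (Hk : 0 < k) by lra. assert (Hk' : 0 < k') by lra.
  split; [apply periodic2_modes|]. split; [apply periodic2_drift|].
  split; [apply C2_slab_modes; [apply C2_fun_f | apply C2_fun_g]|].
  split; [apply cont_on_slab_drift|].
  split; [intros x y t Ht; now apply drift_bounded|].
  split; [intros x y t _; now apply heat_drift_equation|].
  split; [intros x y t [_ Ht]; now apply solution_early|].
  split; [intros x y t [Ht _]; now apply solution_late|].
  split; [intros x y t _; unfold modes; ring|].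
  split; [apply C2_on_RtoC, C2_fun_f|]. split; [apply C2_on_RtoC, C2_fun_g|].
  intros t _. rewrite !Cmod_R. now apply f_g_bounds.
Qed.
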